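(* Let $\mathbb{A}=(A,\backslash,/)$ be a residuation algebra that has no zero-divisors and satisfies $a\backslash(b\vee c)\leq(a\backslash b)\vee(a\backslash c)$ for all $a,b,c\in A$. Then the dual structure $\mathbb{A}^\delta_+$ is total, i.e. $y\cdot z\in J^\infty(A^\delta)$ for all $y,z\in J^\infty(A^\delta)$.
   Context: A residuation algebra is a structure $(A,\backslash,/)$ where $A$ is a bounded distributive lattice and $\backslash,/$ are binary operations on $A$ such that $\backslash$ preserves finite (including empty) meets in its second coordinate, $/$ preserves finite (including empty) meets in its first coordinate, and for all $a,b,c\in A$: $b\leq a\backslash c$ iff $a\leq c/b$. The canonical extension $A^\delta$ of $A$ is the complete lattice containing $A$ as a sublattice that is dense (every element is a join of meets and a meet of joins of elements of $A$) and compact (if $\bigwedge S\leq\bigvee T$ for $S,T\subseteq A$ then this holds for some finite subsets). Let $K(A^\delta)$ (resp. $O(A^\delta)$) be the set of meets (resp. joins) of subsets of $A$. The $\pi$-extension of $\backslash$ is: for $k\in K(A^\delta)$, $o\in O(A^\delta)$, $k\backslash^\pi o=\bigvee\{a\backslash b\mid a,b\in A,\ k\leq a,\ b\leq o\}$, and for arbitrary $u,v$, $u\backslash^\pi v=\bigwedge\{k\backslash^\pi o\mid k\in K(A^\delta), o\in O(A^\delta), k\leq u, v\leq o\}$; $/^\pi$ is defined symmetrically. There is a binary operation $\cdot$ on $A^\delta$ such that for all $u,v,w\in A^\delta$: $v\leq u\backslash^\pi w$ iff $u\cdot v\leq w$ iff $u\leq w/^\pi v$. $J^\infty(A^\delta)$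 is the set of completely join-irreducible elements of $A^\delta$. The dual structure $\mathbb{A}^\delta_+$ is $(J^\infty(A^\delta),\geq,R)$ with $R(x,y,z)$ iff $x\leq y\cdot z$; it is total if $y\cdot z\in J^\infty(A^\delta)$ for all $y,z\in J^\infty(A^\delta)$. $\mathbb{A}$ has no zero-divisors if $x\cdot y\neq\bot$ for all $x,y\in J^\infty(A^\delta)$. *)

From HB Require Import structures.
From mathcomp Require Import all_boot all_order.
Set Implicit Arguments. Unset Strict Implicit. Unset Printing Implicit Defensive.
Import Order.TTheory.
Local Open Scope order_scope.

Record complete_lattice := CompleteLattice {
  cl_car :> Type;
  cl_le : cl_car -> cl_car -> Prop;
  cl_sup : (cl_car -> Prop) -> cl_car;
  cl_refl : forall x, cl_le x x;
  cl_antisym : forall x y, cl_le x y -> cl_le y x -> x = y;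
  cl_trans : forall x y z, cl_le x y -> cl_le y z -> cl_le x z;
  cl_sup_ub : forall (S : cl_car -> Prop) x, S x -> cl_le x (cl_sup S);
  cl_sup_least : forall (S : cl_car -> Prop) y,
      (forall x, S x -> cl_le x y) -> cl_le (cl_sup S) y
}.

Section CL.
Variable C : complete_lattice.
Definition cl_inf (S : C -> Prop) : C :=
  cl_sup (fun y => forall x, S x -> cl_le y x).
Definition cl_bot : C := cl_sup (fun _ => False).
Definition cl_top : C := cl_inf (fun _ => False).
Definition cl_join (x y : C) : C := cl_sup (fun z => z = x \/ z = y).
Definition cl_meet (x y : C) : C := cl_inf (fun z => z = x \/ z = y).

(* completely join-irreducible: whenever j is the join of S, j belongs to S
   (in particular j <> bottom, the join of the empty set) *)
Definition completely_join_irreducible (j : C) : Prop :=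
  forall S : C -> Prop, j = cl_sup S -> S j.
End CL.

Definition residuation_algebra {d} (A : tbDistrLatticeType d)
    (ldiv rdiv : A -> A -> A) : Prop :=
  (forall a b c, ldiv a (b `&` c) = ldiv a b `&` ldiv a c) /\
  (forall a, ldiv a \top = \top) /\
  (forall a b c, rdiv (b `&` c) a = rdiv b a `&` rdiv c a) /\
  (forall a, rdiv \top a = \top) /\
  (forall a b c, b <= ldiv a c <-> a <= rdiv c b).

Section CanExt.
Context {d} (A : tbDistrLatticeType d) (C : complete_lattice) (e : A -> C).

Definition image (S : A -> Prop) : C -> Prop := fun x => exists2 a, S a & x = e a.

Definition bounded_lattice_embedding : Prop :=
  (forall a b, cl_le (e a) (e b) <-> a <= b) /\
  (forall a b, e (a `&` b) = cl_meet (e a) (e b)) /\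
  (forall a b, e (a `|` b) = cl_join (e a) (e b)) /\
  e \bot = cl_bot C /\ e \top = cl_top C.

Definition closed_elt (k : C) : Prop := exists S : A -> Prop, k = cl_inf (image S).
Definition open_elt (o : C) : Prop := exists S : A -> Prop, o = cl_sup (image S).

Definition dense : Prop :=
  forall u : C,
    u = cl_sup (fun k => closed_elt k /\ cl_le k u) /\
    u = cl_inf (fun o => open_elt o /\ cl_le u o).

Definition compact : Prop :=
  forall S T : A -> Prop, cl_le (cl_inf (image S)) (cl_sup (image T)) ->
    exists (s t : seq A), (forall a, a \in s -> S a) /\ (forall b, b \in t -> T b) /\
      \meet_(a <- s) a <= \join_(b <- t) b.

Definition canonical_extension : Prop :=
  bounded_lattice_embedding /\ dense /\ compact.

Definition ldiv_KO (ldiv : A -> A -> A) (k o : C) : C :=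
  cl_sup (fun x => exists a b, cl_le k (e a) /\ cl_le (e b) o /\ x = e (ldiv a b)).
Definition ldiv_pi (ldiv : A -> A -> A) (u v : C) : C :=
  cl_inf (fun x => exists k o, closed_elt k /\ open_elt o /\ cl_le k u /\ cl_le v o /\
                               x = ldiv_KO ldiv k o).
Definition rdiv_OK (rdiv : A -> A -> A) (o k : C) : C :=
  cl_sup (fun x => exists b a, cl_le (e b) o /\ cl_le k (e a) /\ x = e (rdiv b a)).
Definition rdiv_pi (rdiv : A -> A -> A) (u v : C) : C :=
  cl_inf (fun x => exists o k, open_elt o /\ closed_elt k /\ cl_le u o /\ cl_le k v /\
                               x = rdiv_OK rdiv o k).
End CanExt.

From Pilot Require Import Defs.
From mathcomp Require Import all_boot all_order.
From Stdlib Require Import Classical.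
Set Implicit Arguments. Unset Strict Implicit.
Import Order.Theory.
Local Open Scope order_scope.

(* Let x = y z with y, z completely join-irreducible and suppose x = \/ S with
   x above no member of S.  By density every s in S lies below an open element
   not above x, so x <= W, the join of all a in A lying below such opens.  By
   adjunction z <= y \ W, and since y is closed, W open and z closed,
   compactness yields a, b in A with y <= a, b <= W and z <= a \ b, and then
   b <= t_1 \/ ... \/ t_n with each t_i below an open o_i not above x.  The
   hypothesis on \ gives a \ b <= a \ bot \/ a \ t_1 \/ ... \/ a \ t_n, and z,
   being completely join-irreducible in a canonical extension, is join-prime
   with respect to elements of A.  So z <= a \ bot, making y z = bot, or
   z <= a \ t_i, making x = y z <= o_i; both are impossible. *)

Section CompleteLatticeTheory.
Variable C : complete_lattice.
Implicit Types (x y z : C) (S : C -> Prop).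

Lemma cl_inf_lb S x : S x -> cl_le (cl_inf S) x.
Proof. by move=> Sx; apply: cl_sup_least => y; apply. Qed.

Lemma cl_inf_glb S y : (forall x, S x -> cl_le y x) -> cl_le y (cl_inf S).
Proof. exact: cl_sup_ub. Qed.

Lemma cl_bot_le x : cl_le (cl_bot C) x.
Proof. by apply: cl_sup_least. Qed.

Lemma cl_le_top x : cl_le x (cl_top C).
Proof. by apply: cl_inf_glb. Qed.

Lemma cl_meet_l x y : cl_le (cl_meet x y) x.
Proof. by apply: cl_inf_lb; left. Qed.

Lemma cl_meet_r x y : cl_le (cl_meet x y) y.
Proof. by apply: cl_inf_lb; right. Qed.

Lemma cl_meet_glb x y z : cl_le z x -> cl_le z y -> cl_le z (cl_meet x y).
Proof. by move=> zx zy; apply: cl_inf_glb => w [->|->]. Qed.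

Lemma cl_join_l x y : cl_le x (cl_join x y).
Proof. by apply: cl_sup_ub; left. Qed.

Lemma cl_join_r x y : cl_le y (cl_join x y).
Proof. by apply: cl_sup_ub; right. Qed.

Lemma cl_join_lub x y z : cl_le x z -> cl_le y z -> cl_le (cl_join x y) z.
Proof. by move=> xz yz; apply: cl_sup_least => w [->|->]. Qed.

End CompleteLatticeTheory.

Lemma bigjoin_le_directed {d} (L : bLatticeType d) (P : L -> Prop) (t : seq L) :
  (exists c, P c) ->
  (forall c1 c2, P c1 -> P c2 -> exists2 c, P c & c1 `|` c2 <= c) ->
  (forall c, c \in t -> P c) -> exists2 c, P c & \join_(b <- t) b <= c.
Proof.
move=> [c0 Pc0] dirP; elim: t => [|b t IHt] tP.
  by exists c0; rewrite ?big_nil ?le0x.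
have [c' Pc' tc'] : exists2 c', P c' & \join_(b <- t) b <= c'.
  by apply: IHt => c ct; apply: tP; rewrite inE ct orbT.
have [c Pc bc] := dirP b c' (tP b (mem_head b t)) Pc'.
by exists c; rewrite // big_cons (le_trans _ bc) // leU2.
Qed.

Section Residuation.
Context {d} (A : tbDistrLatticeType d) (ldiv rdiv : A -> A -> A).
Hypothesis resA : residuation_algebra ldiv rdiv.

Lemma le_ldivr a b c : b <= c -> ldiv a b <= ldiv a c.
Proof.
case: resA => ldivI _ /meet_idPl bc.
by have := ldivI a b c; rewrite bc => ->; apply: leIr.
Qed.

Lemma le_ldivl a a' c : a' <= a -> ldiv a c <= ldiv a' c.
Proof.
case: resA => _ [_ [_ [_ ldiv_rdiv]]] a'a.
by apply/ldiv_rdiv; apply: le_trans a'a _; apply/ldiv_rdiv.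
Qed.

End Residuation.

Lemma ldiv_bigjoin_le {d} (A : tbDistrLatticeType d) (ldiv : A -> A -> A)
    a (l : seq A) :
  (forall a b c, ldiv a (b `|` c) <= ldiv a b `|` ldiv a c) ->
  ldiv a (\join_(b <- l) b) <= ldiv a \bot `|` \join_(b <- l) ldiv a b.
Proof.
move=> ldivU; elim: l => [|b l IHl]; first by rewrite !big_nil joinx0.
rewrite !big_cons joinCA; apply: le_trans (ldivU _ _ _) _.
exact: leU2.
Qed.

Section CanonicalExtension.
Context {d} (A : tbDistrLatticeType d) (C : complete_lattice) (e : A -> C).
Hypothesis e_emb : bounded_lattice_embedding e.
Hypothesis e_dense : dense e.
Hypothesis e_compact : compact e.

Lemma e_mono a b : a <= b -> cl_le (e a) (e b).
Proof. by case: e_emb => e_le _; rewrite e_le. Qed.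

Lemma le_e_meet j a b : cl_le j (e a) -> cl_le j (e b) -> cl_le j (e (a `&` b)).
Proof. by case: e_emb => _ [-> _]; apply: cl_meet_glb. Qed.

Lemma e_join_le w a b : cl_le (e a) w -> cl_le (e b) w -> cl_le (e (a `|` b)) w.
Proof. by case: e_emb => _ [_ [-> _]]; apply: cl_join_lub. Qed.

Lemma e_bot_le w : cl_le (e \bot) w.
Proof. by case: e_emb => _ [_ [_ [-> _]]]; apply: cl_bot_le. Qed.

Lemma le_e_top j : cl_le j (e \top).
Proof. by case: e_emb => _ [_ [_ [_ ->]]]; apply: cl_le_top. Qed.

Lemma le_e_bigmeet j (s : seq A) (P : pred A) :
  (forall a, a \in s -> P a -> cl_le j (e a)) ->
  cl_le j (e (\meet_(a <- s | P a) a)).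
Proof.
move=> js; rewrite big_seq_cond; apply: (big_ind (fun x => cl_le j (e x))) => //.
- exact: le_e_top.
- exact: le_e_meet.
- by move=> a /andP[]; apply: js.
Qed.

Lemma e_bigjoin_le w (s : seq A) :
  (forall a, a \in s -> cl_le (e a) w) -> cl_le (e (\join_(a <- s) a)) w.
Proof.
move=> sw; rewrite big_seq; apply: (big_ind (fun x => cl_le (e x) w)) => //.
- exact: e_bot_le.
- exact: e_join_le.
Qed.

Lemma cji_closed j : completely_join_irreducible j -> closed_elt e j.
Proof. by move=> j_cji; have [j_sup _] := e_dense j; case: (j_cji _ j_sup). Qed.

Lemma le_of_opens x u :
  (forall o, open_elt e o -> cl_le u o -> cl_le x o) -> cl_le x u.
Proof.
by move=> xo; have [_ ->] := e_dense u; apply: cl_inf_glb => o []; apply: xo.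
Qed.

Lemma e_le_open b (T : A -> Prop) :
  cl_le (e b) (cl_sup (Defs.image e T)) ->
  exists t : seq A, (forall c, c \in t -> T c) /\ b <= \join_(c <- t) c.
Proof.
move=> bT; have [|s [t [sb [tT st]]]] := @e_compact (eq b) T _.
  by apply: cl_trans bT; apply: cl_inf_lb; exists b.
exists t; split=> //; apply: le_trans st; apply/meetsP_seq => a /sb -> _.
exact: lexx.
Qed.

(* The compactness step behind the distributivity of the canonical extension. *)
Lemma closed_meet_e_le_open (U T : A -> Prop) c :
  cl_le (cl_meet (cl_inf (Defs.image e U)) (e c)) (cl_sup (Defs.image e T)) ->
  exists u (t : seq A), [/\ cl_le (cl_inf (Defs.image e U)) (e u),
    forall b, b \in t -> T b & u `&` c <= \join_(b <- t) b].
Proof.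
move=> kcT; pose V a := U a \/ a = c.
have [|s [t [sV [tT st]]]] := @e_compact V T _.
  apply: cl_trans kcT; apply: cl_meet_glb.
    by apply: cl_inf_glb => _ [a Ua ->]; apply: cl_inf_lb; exists a; rewrite /V; auto.
  by apply: cl_inf_lb; exists c; rewrite /V; auto.
exists (\meet_(a <- s | a != c) a), t; split=> //.
  apply: le_e_bigmeet => a /sV [Ua _|-> /eqP//].
  by apply: cl_inf_lb; exists a.
apply: le_trans st; apply/meetsP_seq => a a_s _.
have [-> | ac] := eqVneq a c; first exact: leIr.
by apply: le_trans (leIl _ _) _; apply: meets_inf_seq.
Qed.

Lemma cji_join_prime j c1 c2 : completely_join_irreducible j ->
  cl_le j (e (c1 `|` c2)) -> cl_le j (e c1) \/ cl_le j (e c2).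
Proof.
move=> j_cji jc; have [U jU] := cji_closed j_cji.
have jm : j = cl_join (cl_meet j (e c1)) (cl_meet j (e c2)).
  apply: cl_antisym; last by apply: cl_join_lub; apply: cl_meet_l.
  apply: le_of_opens => _ [T ->] mT.
  rewrite jU in mT.
  have [u1 [t1 [ju1 t1T u1t1]]] :=
    closed_meet_e_le_open (cl_trans (cl_join_l _ _) mT).
  have [u2 [t2 [ju2 t2T u2t2]]] :=
    closed_meet_e_le_open (cl_trans (cl_join_r _ _) mT).
  rewrite -jU in ju1 ju2.
  have ju : cl_le j (e (u1 `&` u2 `&` (c1 `|` c2))).
    by apply: le_e_meet => //; apply: le_e_meet.
  apply: cl_trans ju (cl_trans (e_mono _) (e_bigjoin_le (s := t1 ++ t2) _)).
    rewrite big_cat meetUr; apply: leU2.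
      by apply: le_trans u1t1; apply: leI2 => //; apply: leIl.
    by apply: le_trans u2t2; apply: leI2 => //; apply: leIr.
  move=> a; rewrite mem_cat => /orP a_t; apply: cl_sup_ub; exists a => //.
  by case: a_t; [apply: t1T | apply: t2T].
by case: (j_cji _ jm) => ->; [left | right]; apply: cl_meet_r.
Qed.

Lemma cji_le_e_bigjoin j (F : A -> A) (l : seq A) : completely_join_irreducible j ->
  cl_le j (e (\join_(c <- l) F c)) -> exists2 c, c \in l & cl_le j (e (F c)).
Proof.
move=> j_cji; elim: l => [|c l IHl].
  rewrite big_nil; case: e_emb => _ [_ [_ [-> _]]] jbot.
  by case: (j_cji (fun _ => False)); apply: cl_antisym jbot (cl_bot_le _).
rewrite big_cons => /(cji_join_prime j_cji) [jc | /IHl [c' c'l jc']].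
  by exists c; rewrite ?mem_head.
by exists c'; rewrite // inE c'l orbT.
Qed.

Definition below_open_avoiding (x : C) (a : A) : Prop :=
  exists2 o, open_elt e o & ~ cl_le x o /\ cl_le (e a) o.

Lemma le_sup_below_open_avoiding x s :
  ~ cl_le x s -> cl_le s (cl_sup (Defs.image e (below_open_avoiding x))).
Proof.
move=> xs; have [o [Oo so xo]] : exists o, [/\ open_elt e o, cl_le s o & ~ cl_le x o].
  apply: NNPP => none; apply: xs; apply: le_of_opens => o Oo so.
  by apply: NNPP => xo; apply: none; exists o.
have [T oT] := Oo; apply: cl_trans so _; rewrite {1}oT.
apply: cl_sup_least => _ [a Ta ->]; apply: cl_sup_ub; exists a => //.
by exists o => //; split=> //; rewrite oT; apply: cl_sup_ub; exists a.
Qed.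

Variables ldiv rdiv : A -> A -> A.
Hypothesis resA : residuation_algebra ldiv rdiv.

Lemma closed_le_ldiv_KO k y W : closed_elt e k -> cl_le k (ldiv_KO e ldiv y W) ->
  exists a b, [/\ cl_le y (e a), cl_le (e b) W & cl_le k (e (ldiv a b))].
Proof.
move=> [U ->] kKO.
pose P c := exists a b, [/\ cl_le y (e a), cl_le (e b) W & c = ldiv a b].
have [|s [t [sU [tP st]]]] := @e_compact U P _.
  apply: cl_trans kKO _; apply: cl_sup_least => _ [a [b [ya [bW ->]]]].
  by apply: cl_sup_ub; exists (ldiv a b) => //; exists a, b.
have P_top_bot : P (ldiv \top \bot).
  by exists \top, \bot; split; [apply: le_e_top | apply: e_bot_le |].
have P_directed c1 c2 : P c1 -> P c2 -> exists2 c, P c & c1 `|` c2 <= c.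
  move=> [a1 [b1 [ya1 b1W ->]]] [a2 [b2 [ya2 b2W ->]]].
  exists (ldiv (a1 `&` a2) (b1 `|` b2)).
    by exists (a1 `&` a2), (b1 `|` b2); split; [apply: le_e_meet | apply: e_join_le |].
  rewrite leUx; apply/andP; split.
    exact: le_trans (le_ldivr resA _ (leUl _ _)) (le_ldivl resA _ (leIl _ _)).
  exact: le_trans (le_ldivr resA _ (leUr _ _)) (le_ldivl resA _ (leIr _ _)).
have [_ [a [b [ya bW ->]]] tab] :=
  bigjoin_le_directed (ex_intro _ _ P_top_bot) P_directed tP.
exists a, b; split=> //; apply: cl_trans (e_mono (le_trans st tab)).
by apply: le_e_bigmeet => u /sU Uu _; apply: cl_inf_lb; exists u.
Qed.

End CanonicalExtension.

Section PiExtension.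
Context {d} (A : tbDistrLatticeType d) (C : complete_lattice) (e : A -> C).
Variable ldiv : A -> A -> A.

Lemma ldiv_pi_le_KO k o : closed_elt e k -> open_elt e o ->
  cl_le (ldiv_pi e ldiv k o) (ldiv_KO e ldiv k o).
Proof.
by move=> Kk Oo; apply: cl_inf_lb; exists k, o; do !split => //; apply: cl_refl.
Qed.

Variable mult : C -> C -> C.
Hypothesis ldiv_pi_mult :
  forall u v w, cl_le v (ldiv_pi e ldiv u w) -> cl_le (mult u v) w.

Lemma mult_le_of_le_e_ldiv y z w a b : cl_le y (e a) -> cl_le (e b) w ->
  cl_le z (e (ldiv a b)) -> cl_le (mult y z) w.
Proof.
move=> ya bw zab; apply: ldiv_pi_mult; apply: cl_trans zab _.
apply: cl_inf_glb => _ [k [o [_ [_ [ky [wo ->]]]]]]; apply: cl_sup_ub.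
by exists a, b; split; [exact: cl_trans ky ya | split; [exact: cl_trans bw wo |]].
Qed.

End PiExtension.

Theorem corollary2p6 {d} (A : tbDistrLatticeType d) (ldiv rdiv : A -> A -> A)
  (C : complete_lattice) (e : A -> C) (mult : C -> C -> C) :
  residuation_algebra ldiv rdiv ->
  canonical_extension e ->
  (* mult is the operation on A^delta residuated by the pi-extensions *)
  (forall u v w : C,
     (cl_le v (ldiv_pi e ldiv u w) <-> cl_le (mult u v) w) /\
     (cl_le (mult u v) w <-> cl_le u (rdiv_pi e rdiv w v))) ->
  (* no zero-divisors *)
  (forall x y : C, completely_join_irreducible x -> completely_join_irreducible y ->
     mult x y <> cl_bot C) ->
  (forall a b c : A, ldiv a (b `|` c) <= ldiv a b `|` ldiv a c) ->
  forall y z : C, completely_join_irreducible y -> completely_join_irreducible z ->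
    completely_join_irreducible (mult y z).
Proof.
move=> resA [e_emb [e_dense e_compact]] adj no_zero_div ldivU y z y_cji z_cji S xS.
have [ldiv_pi_mult mult_ldiv_pi] := conj (fun u v w => (adj u v w).1.1)
                                         (fun u v w => (adj u v w).1.2).
set x := mult y z in xS *.
suff [s Ss xs] : exists2 s, S s & cl_le x s.
  by have -> : x = s by apply: cl_antisym xs _; rewrite xS; apply: cl_sup_ub.
apply: NNPP => noS; pose W := cl_sup (Defs.image e (below_open_avoiding e x)).
have xW : cl_le x W.
  rewrite {1}xS; apply: cl_sup_least => s Ss.
  by apply: le_sup_below_open_avoiding => // xs; apply: noS; exists s.
have zKO : cl_le z (ldiv_KO e ldiv y W) := cl_trans (mult_ldiv_pi _ _ _ xW)
  (ldiv_pi_le_KO ldiv (cji_closed e_dense y_cji) (ex_intro _ _ erefl)).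
have [a [b [ya bW zab]]] :=
  closed_le_ldiv_KO e_emb e_compact resA (cji_closed e_dense z_cji) zKO.
have [t [tT bt]] := e_le_open e_compact bW.
have := le_trans (le_ldivr resA a bt) (ldiv_bigjoin_le a t ldivU).
move=> /(e_mono e_emb) /(cl_trans zab) /(cji_join_prime e_emb e_dense e_compact z_cji).
case=> [zbot | /(cji_le_e_bigjoin e_emb e_dense e_compact z_cji) [c ct zc]].
  apply: (no_zero_div y z y_cji z_cji); apply: cl_antisym _ (cl_bot_le _).
  exact: (mult_le_of_le_e_ldiv ldiv_pi_mult) ya (e_bot_le e_emb _) zbot.
have [o _ [xo co]] := tT c ct.
by apply: xo; apply: (mult_le_of_le_e_ldiv ldiv_pi_mult) ya co zc.
Qed.
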